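(* Let $H$ be obtained from a graph $G$ on vertices $v_1,\dots,v_k$ by expanding each $v_i$ by the graph $M_i=(V_i,E_i)$. Let $\Omega$ be a potential maximal clique of $H$ and let $\Omega_G=\{v_i \mid V_i\cap\Omega\neq\emptyset\}$. If $\Omega=\bigcup_{v_i\in\Omega_G}V_i$, then $\Omega_G$ is a potential maximal clique of $G$.
   Context: Expansion: given a graph $G$ on vertices $v_1,\dots,v_k$ and pairwise disjoint graphs $M_i=(V_i,E_i)$, the graph $H$ obtained by expanding each $v_i$ by $M_i$ has vertex set $V_1\cup\dots\cup V_k$ and edge set $E_1\cup\dots\cup E_k\cup\{ab \mid a\in V_i, b\in V_j, v_iv_j\in E(G)\}$. A graph is chordal if every cycle of length at least 4 has a chord; a minimal triangulation of a graph $F$ is a chordal supergraph on the same vertex set such that no proper subset of its edge set containing $E(F)$ gives a chordal graph. A potential maximal clique of $F$ is a vertex set that is a maximal clique of some minimal triangulation of $F$. *)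

From mathcomp Require Import all_boot.
Set Implicit Arguments. Unset Strict Implicit. Unset Printing Implicit Defensive.

Section Graphs.
Variable T : finType.

Definition simple_graph (e : rel T) : Prop := symmetric e /\ irreflexive e.

Definition has_chord (e : rel T) (s : seq T) : Prop :=
  exists x y, [/\ x \in s, y \in s, x != y,
                  (y != next s x) && (x != next s y) & e x y].

Definition chordal (e : rel T) : Prop :=
  forall s : seq T, uniq s -> 4 <= size s -> cycle e s -> has_chord e s.

Definition subrel_edges (e1 e2 : rel T) : Prop := forall x y, e1 x y -> e2 x y.

Definition minimal_triangulation (e f : rel T) : Prop :=
  [/\ simple_graph f, subrel_edges e f, chordal f &
      forall g : rel T, simple_graph g -> subrel_edges e g -> subrel_edges g f ->
        (exists x y, f x y && ~~ g x y) -> ~ chordal g].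

Definition is_clique (e : rel T) (S : {set T}) : Prop :=
  forall x y, x \in S -> y \in S -> x != y -> e x y.

Definition maximal_clique (e : rel T) (S : {set T}) : Prop :=
  is_clique e S /\ forall S' : {set T}, S \proper S' -> ~ is_clique e S'.

Definition potential_maximal_clique (e : rel T) (S : {set T}) : Prop :=
  exists f : rel T, minimal_triangulation e f /\ maximal_clique f S.

End Graphs.

(* Expansion: the vertex set of H is V, partitioned into blocks V_i = f^-1(i)
   for i : K (vertices of G).  M_i is the graph on V_i given by eM restricted
   to V_i. *)
Definition expand (K V : finType) (eG : rel K) (eM : rel V) (f : V -> K) : rel V :=
  fun x y => ((f x == f y) && eM x y) || eG (f x) (f y).

From mathcomp Require Import all_boot zify.
From Stdlib Require Import Classical.
Set Implicit Arguments. Unset Strict Implicit. Unset Printing Implicit Defensive.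

(* Let F be a minimal triangulation of H with maximal clique Omega, and let Q be the
   graph on the vertices of G joining two blocks that F joins completely.  A chordless
   cycle of Q yields a chordless cycle of F (shrink each block of a shortest, smallest
   such cycle of blocks to a point), so Q is chordal; Q contains G and Omega_G is a
   maximal clique of Q.  Let g be chordal with G <= g <= Q.  Make a clique of the
   g-neighbourhood of every block that is not a clique of F: these blocks are
   pairwise non-adjacent in Q and lie outside Omega_G, so the result h is chordal and
   still below Q.  Lifting h to H, with F inside the blocks, gives a chordal graph
   between H and F, hence F itself; so h = Q, Omega_G is a maximal clique of h and,
   removing the added cliques one at a time, of g.  Therefore a chordal g between G
   and Q in which Omega_G is a clique, with as few edges as possible, is a minimal
   triangulation of G with maximal clique Omega_G. *)

(* A cycle of length [n] is enumerated by [c : nat -> T] on the indices [0 .. n-1]. *)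
Definition cnext n i := if i.+1 < n then i.+1 else 0.

Lemma cnext_lt n i : i < n -> cnext n i < n.
Proof. by rewrite /cnext; case: ifP => //; lia. Qed.

Lemma cnextE n i : i < n ->
  (cnext n i = i.+1 /\ i.+1 < n) \/ (cnext n i = 0 /\ i.+1 = n).
Proof. by rewrite /cnext; case: ifP; lia. Qed.

Definition nonadjacent n i j := [/\ i <> j, j <> cnext n i & i <> cnext n j].

Lemma cnext_inj n i j : i < n -> j < n -> cnext n i = cnext n j -> i = j.
Proof. by move=> /cnextE + /cnextE; lia. Qed.

Lemma cnext_neq n i : 1 < n -> i < n -> cnext n i <> i.
Proof. by move=> n1 /cnextE; lia. Qed.

Lemma cnext2_neq n i : 2 < n -> i < n -> cnext n (cnext n i) <> i.
Proof. by move=> n2 lt_i; have := cnextE lt_i; have := cnextE (cnext_lt lt_i); lia. Qed.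

Lemma cnext3_neq n i : 3 < n -> i < n -> cnext n (cnext n (cnext n i)) <> i.
Proof.
move=> n3 lt_i; have lt_i1 := cnext_lt lt_i; have lt_i2 := cnext_lt lt_i1.
by have := cnextE lt_i; have := cnextE lt_i1; have := cnextE lt_i2; lia.
Qed.

Lemma cnext_exit n (P : pred nat) i m : i < n -> m < n -> P i -> ~~ P m ->
  exists z, [/\ z < n, P z & ~~ P (cnext n z)].
Proof.
move=> lt_i lt_m Pi Pm; apply: NNPP => no_exit.
have Pnext z : z < n -> P z -> P (cnext n z).
  by move=> lt_z Pz; apply: NNPP => /negP Pz1; apply: no_exit; exists z.
have P_up d : i + d < n -> P (i + d).
  elim: d => [|d IH] lt_d; first by rewrite addn0.
  rewrite addnS; have := Pnext (i + d) ltac:(lia) (IH ltac:(lia)).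
  by rewrite /cnext ifT //; lia.
have P0 : P 0.
  have := Pnext n.-1 ltac:(lia); rewrite /cnext ifF; last lia.
  apply; have -> : n.-1 = i + (n.-1 - i) by lia.
  by apply: P_up; lia.
have P_all d : d < n -> P d.
  elim: d => [|d IH] lt_d //.
  by have := Pnext d ltac:(lia) (IH ltac:(lia)); rewrite /cnext ifT //; lia.
by move/negP: Pm; apply; apply: P_all.
Qed.

Lemma nonadjacent_sym n i j : nonadjacent n i j -> nonadjacent n j i.
Proof. by case=> ij h1 h2; split=> // ji; apply: ij. Qed.

Definition inj_below (T : Type) n (c : nat -> T) :=
  forall i j, i < n -> j < n -> c i = c j -> i = j.

Section Holes.
Variables (T : Type) (e : rel T).

Definition ncycle n (c : nat -> T) := forall i, i < n -> e (c i) (c (cnext n i)).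

Definition chordless n (c : nat -> T) :=
  forall i j, i < n -> j < n -> nonadjacent n i j -> ~~ e (c i) (c j).

Definition hole n c := [/\ 4 <= n, inj_below n c, ncycle n c & chordless n c].

Definition holefree := forall n c, ~ hole n c.

Lemma chordless_adjacent n c k l : chordless n c -> k < n -> l < n -> k <> l ->
  e (c k) (c l) -> l = cnext n k \/ k = cnext n l.
Proof.
move=> c_nochord lt_k lt_l kl ekl; apply: NNPP => /not_or_and [h1 h2].
by move/negP: (c_nochord k l lt_k lt_l (And3 kl h1 h2)).
Qed.

End Holes.

Lemma next_nth_uniq (T : eqType) (s : seq T) x0 i : uniq s -> i < size s ->
  next s (nth x0 s i) = nth x0 s (cnext (size s) i).
Proof.
move=> s_uniq lt_i; rewrite next_nth mem_nth // index_uniq //.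
case: s s_uniq lt_i => [|y q] //= /andP[_ q_uniq] lt_i.
rewrite /cnext /=; case: ifP => h; first by apply: set_nth_default; lia.
by rewrite nth_default //; lia.
Qed.

Lemma chordalE (T : finType) (e : rel T) : chordal e <-> holefree e.
Proof.
split=> [ch n c [n4 c_inj c_cyc c_nochord] | hf s s_uniq s4 s_cyc].
  set s := mkseq c n.
  have size_s : size s = n by rewrite size_mkseq.
  have nth_s i : i < n -> nth (c 0) s i = c i by move=> lt_i; rewrite nth_mkseq.
  have s_uniq : uniq s.
    rewrite map_inj_in_uniq ?iota_uniq // => i j.
    by rewrite !mem_iota /= !add0n; exact: c_inj.
  have memsP x : x \in s -> exists2 i, i < n & x = c i.
    move=> xs; have lt_x : index x s < n by rewrite -size_s index_mem.
    by exists (index x s); rewrite // -nth_s ?nth_index.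
  have next_s i : i < n -> next s (c i) = c (cnext n i).
    by move=> lt_i; rewrite -nth_s // next_nth_uniq ?size_s // nth_s // cnext_lt.
  have s_cyc : cycle e s.
    by apply: cycle_from_next => // x /memsP [i lt_i ->]; rewrite next_s //; exact: c_cyc.
  have s4 : 4 <= size s by rewrite size_s.
  have [x [y [/memsP [i lt_i ->] /memsP [j lt_j ->] cij /andP [h1 h2] ecij]]] :=
    ch s s_uniq s4 s_cyc.
  apply/negP: ecij; apply: c_nochord => //; split.
  - by move=> eij; rewrite eij eqxx in cij.
  - by move=> E; move: h1; rewrite next_s // -E eqxx.
  - by move=> E; move: h2; rewrite next_s // -E eqxx.
case: s s_uniq s4 s_cyc => [|x0 q] // s_uniq s4 s_cyc.
set s := x0 :: q in s_uniq s4 s_cyc *; set c := nth x0 s.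
have c_inj : inj_below (size s) c by move=> i j lt_i lt_j /eqP; rewrite nth_uniq // => /eqP.
apply: NNPP => nochord; apply: (hf (size s) c); split=> //.
  by move=> i lt_i; rewrite /c -next_nth_uniq //; apply: next_cycle => //; exact: mem_nth.
move=> i j lt_i lt_j [ij h1 h2]; apply/negP => ecij; apply: nochord.
exists (c i), (c j); split; rewrite /c ?mem_nth //.
  by apply/eqP => /(c_inj _ _ lt_i lt_j).
by apply/andP; split; apply/eqP; rewrite next_nth_uniq // => /c_inj E;
  [apply: h1 | apply: h2]; apply: E => //; exact: cnext_lt.
Qed.

Lemma holefree_square (T : eqType) (e : rel T) a b c d : symmetric e -> holefree e ->
  uniq [:: a; b; c; d] -> e a b -> e b c -> e c d -> e d a -> e a c || e b d.
Proof.
move=> e_sym e_hf abcd_uniq eab ebc ecd eda.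
apply/negPn/negP => /norP [nac nbd]; apply: (e_hf 4 (nth a [:: a; b; c; d])).
split=> //.
- by move=> i j lt_i lt_j /eqP; rewrite nth_uniq // => /eqP.
- by move=> [|[|[|[|i]]]].
- move=> [|[|[|[|i]]]] [|[|[|[|j]]]] //= _ _ [];
    rewrite /cnext //= ?(e_sym b) ?(e_sym c) ?(e_sym d) //.
Qed.

Section SetHoles.
Variables (T : finType) (F : rel T).
Hypothesis F_sym : symmetric F.
Hypothesis F_holefree : holefree F.

Definition joined (A B : {set T}) := forall x y, x \in A -> y \in B -> F x y.

Lemma joinedC A B : joined A B -> joined B A.
Proof. by move=> AB x y xB yA; rewrite F_sym; apply: AB. Qed.

Lemma joinedS (A B A' B' : {set T}) :
  A' \subset A -> B' \subset B -> joined A B -> joined A' B'.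
Proof. by move=> /subsetP sA /subsetP sB AB x y /sA xA /sB yB; apply: AB. Qed.

Definition set_hole k (X : nat -> {set T}) :=
  [/\ 4 <= k, forall t, t < k -> X t != set0,
      forall t u, t < k -> u < k -> t <> u -> [disjoint X t & X u],
      forall t, t < k -> joined (X t) (X (cnext k t))
    & forall t u, t < k -> u < k -> nonadjacent k t u -> ~ joined (X t) (X u)].

Section MinimalSetHole.
Variable k : nat.
Hypothesis no_shorter : forall k', k' < k -> forall Y, ~ set_hole k' Y.

(* For the least [u] with [m] joined to [X u], the sets [[set m], X 1, ..., X u]
   would form a shorter set hole. *)
Lemma set_hole_joined_second X m : set_hole k X -> m \in X 0 ->
  forall u, 2 <= u -> u <= k - 2 -> joined [set m] (X u) -> joined [set m] (X 2).
Proof.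
case=> k4 X_neq0 X_disj X_joined X_apart mX.
elim/ltn_ind => u IHu u2 uk mXu.
case: (ltngtP u 2) => [|lt2u|<-] //; first lia.
apply: NNPP => mX2; pose Y i := if i == 0 then [set m] else X i.
have nextE i : cnext u.+1 i = if i < u then i.+1 else 0.
  by rewrite /cnext; case: (ltnP i u) => hh; [rewrite ifT ?ifT | rewrite ifF ?ifF]; lia.
apply: (no_shorter (k' := u.+1) _ (Y := Y)); first lia.
split.
- lia.
- move=> t lt; rewrite /Y; case: ifP => _; last by apply: X_neq0; lia.
  by apply/set0Pn; exists m; rewrite inE.
- have m_disj j : 0 < j -> j < k -> [disjoint [set m] & X j].
    move=> j0 jk; rewrite disjoints_subset sub1set inE.
    have := X_disj 0 j ltac:(lia) jk ltac:(lia); rewrite disjoints_subset.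
    by move/subsetP => /(_ m mX); rewrite inE.
  move=> t v lt lv tv; rewrite /Y.
  case: eqP => [t0|t0]; case: eqP => [v0|v0]; try lia.
  + by apply: m_disj; lia.
  + by rewrite disjoint_sym; apply: m_disj; lia.
  + by apply: X_disj; lia.
- move=> t lt; rewrite /Y nextE; case: (ltnP t u) => htu; last first.
    have -> : t = u by lia.
    by rewrite eqxx ifF; [apply: joinedC | lia].
  case: eqP => [->|t0] /=.
    have := X_joined 0 ltac:(lia); rewrite /cnext ifT; last lia.
    by move=> X01 x y; rewrite inE => /eqP ->; apply: X01.
  by have := X_joined t ltac:(lia); rewrite /cnext ifT //; lia.
- have m_apart w : 2 <= w -> w < u -> ~ joined [set m] (X w).
    by move=> w2 wu mXw; apply: mX2; apply: IHu mXw => //; lia.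
  move=> t v lt lv [tv vt tv']; rewrite !nextE in vt tv'; rewrite /Y.
  case: eqP => [t0|t0]; case: eqP => [v0|v0]; first lia.
  + by apply: m_apart; move: vt tv'; rewrite t0; case: ifP; case: ifP; lia.
  + by move/joinedC; apply: m_apart; move: vt tv'; rewrite v0; case: ifP; case: ifP; lia.
  + apply: X_apart; try lia; move: vt tv'; do 2 case: ifP => ? ?.
    all: by split; try lia; rewrite /cnext; case: ifP; lia.
Qed.

Definition rotn t i := if i + t < k then i + t else i + t - k.

Lemma rotn_lt t i : t < k -> i < k -> rotn t i < k.
Proof. by rewrite /rotn; case: ifP; lia. Qed.

Lemma rotn_inj t i j : t < k -> i < k -> j < k -> rotn t i = rotn t j -> i = j.
Proof. by rewrite /rotn; case: ifP; case: ifP; lia. Qed.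

Lemma cnext_rotn t i : t < k -> i < k -> cnext k (rotn t i) = rotn t (cnext k i).
Proof. by rewrite /rotn /cnext => h1 h2; do ! case: ifP; lia. Qed.

Lemma set_hole_rot X t : t < k -> set_hole k X -> set_hole k (fun i => X (rotn t i)).
Proof.
move=> tk [k4 X_neq0 X_disj X_joined X_apart]; split=> //.
- by move=> i li; apply: X_neq0; apply: rotn_lt.
- move=> i j li lj ij; apply: X_disj; try exact: rotn_lt.
  by move/(rotn_inj tk li lj).
- by move=> i li; rewrite -cnext_rotn //; apply: X_joined; apply: rotn_lt.
- move=> i j li lj [ij h1 h2]; apply: X_apart; try exact: rotn_lt.
  split; first by move/(rotn_inj tk li lj).
  + by rewrite cnext_rotn // => /(rotn_inj tk lj (cnext_lt li)).
  + by rewrite cnext_rotn // => /(rotn_inj tk li (cnext_lt lj)).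
Qed.

Lemma set_hole_not_joined X t m : set_hole k X -> t < k -> m \in X t ->
  ~ joined [set m] (X (rotn t 2)) ->
  forall u, u < k -> nonadjacent k t u -> ~ joined [set m] (X u).
Proof.
move=> X_hole tk mX mX2 u uk [ut u1 u2] mXu.
have k4 : 4 <= k by case: X_hole.
pose u' := if t <= u then u - t else u + k - t.
have rot_u' : rotn t u' = u by rewrite /rotn /u'; case: ifP; case: ifP; lia.
have [u'2 u'k] : 2 <= u' /\ u' <= k - 2.
  by move: u1 u2; rewrite /u' /cnext; case: ifP; case: ifP; case: ifP; lia.
apply: mX2; have := set_hole_joined_second (set_hole_rot tk X_hole).
rewrite /= {1}/rotn add0n ifT // => /(_ _ mX u' u'2 u'k).
by rewrite rot_u' => /(_ mXu).
Qed.

End MinimalSetHole.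

Lemma set_hole_singletons k X : set_hole k X -> ~ (forall t, t < k -> #|X t| <= 1).
Proof.
case=> k4 X_neq0 X_disj X_joined X_apart X_small.
have X1 t : t < k -> exists x, X t = [set x].
  move=> tk; have /set0Pn [x xX] := X_neq0 t tk.
  by exists x; apply/eqP; rewrite eq_sym eqEcard sub1set xX cards1 X_small.
have [x0 _] := X1 0 ltac:(lia).
pose c t := odflt x0 [pick x in X t].
have XE t : t < k -> X t = [set c t].
  move=> tk; have [x E] := X1 t tk; rewrite /c E.
  by case: pickP => [y /set1P -> //|/(_ x)]; rewrite set11.
apply: (F_holefree (n := k) (c := c)); split=> //.
- move=> i j li lj cij; apply: NNPP => ij.
  have := X_disj i j li lj ij; rewrite (XE i li) (XE j lj) cij.
  by rewrite disjoints_subset sub1set !inE eqxx.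
- move=> i li; have := X_joined i li; rewrite (XE i li) (XE _ (cnext_lt li)).
  by apply; rewrite inE.
- move=> i j li lj ij; apply/negP => Fcij; apply: (X_apart i j li lj ij).
  by rewrite (XE i li) (XE j lj) => x y /set1P -> /set1P ->.
Qed.

Lemma set_hole_shrink k X t m : set_hole k X -> t < k -> m \in X t ->
  (forall u, u < k -> nonadjacent k t u -> ~ joined [set m] (X u)) ->
  set_hole k (fun i => if i == t then [set m] else X i).
Proof.
move=> [k4 X_neq0 X_disj X_joined X_apart] tk mX m_apart.
have sm : [set m] \subset X t by rewrite sub1set.
split=> //.
- move=> i ik /=; case: (i =P t) => _; last exact: X_neq0.
  by apply/set0Pn; exists m; rewrite inE.
- move=> i j ik jk ij /=; case: (i =P t) => [Ei|_]; case: (j =P t) => [Ej|_].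
  + by subst; case: ij.
  + by subst i; apply: disjointWl sm _; apply: X_disj.
  + by subst j; apply: disjointWr sm _; apply: X_disj.
  + exact: X_disj.
- move=> i ik /=; case: (i =P t) => [Ei|it]; case: (cnext k i =P t) => [E|_].
  + by subst i; move: E; rewrite /cnext; case: ifP; lia.
  + by subst i; apply: joinedS (X_joined t tk).
  + by apply: joinedS (X_joined i ik) => //; rewrite E.
  + exact: X_joined.
- move=> i j ik jk [ij h1 h2] /=; case: (i =P t) => [Ei|it]; case: (j =P t) => [Ej|_].
  + by subst; case: ij.
  + by subst i; apply: (m_apart j jk).
  + by subst j => /joinedC; apply: (m_apart i ik); split=> // ti; apply: ij.
  + exact: X_apart.
Qed.

(* Induction on the length of the hole, then on its total size: a point [m] of a
   non-singleton [X t] not joined to [X (t + 2)] can replace [X t]. *)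
Lemma holefree_no_set_hole k X : ~ set_hole k X.
Proof.
elim/ltn_ind: k X => k IHk X.
suff : forall n (X : nat -> {set T}), \sum_(i < k) #|X i| = n -> ~ set_hole k X by apply.
elim/ltn_ind => n IHn {}X sizeX X_hole.
have [k4 _ _ _ X_apart] := X_hole.
case: (boolP [exists t : 'I_k, 1 < #|X t|]) => [/existsP [[t tk] /= Xt_big]|]; last first.
  move/existsPn => X_small; apply: (set_hole_singletons X_hole) => t tk.
  by have := X_small (Ordinal tk); rewrite /= ltnNge negbK.
have r2k : rotn k t 2 < k by apply: rotn_lt => //; lia.
have t2 : nonadjacent k t (rotn k t 2) by split; rewrite /rotn /cnext; do ! case: ifP; lia.
have [m [mX mX2]] : exists m, m \in X t /\ ~ joined [set m] (X (rotn k t 2)).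
  apply: NNPP => all_joined; apply: (X_apart t _ tk r2k t2) => x y xX yX.
  apply: NNPP => nFxy; apply: all_joined; exists x; split=> // /(_ x y).
  by rewrite inE eqxx => /(_ erefl yX).
have Y_hole := set_hole_shrink X_hole tk mX (set_hole_not_joined IHk X_hole tk mX mX2).
apply: IHn _ _ erefl Y_hole; rewrite -sizeX.
rewrite (bigD1 (Ordinal tk)) //= [X in _ < X](bigD1 (Ordinal tk)) //= eqxx cards1.
rewrite (eq_bigr (fun i : 'I_k => #|X i|)) ?ltn_add2r // => i.
by rewrite -val_eqE /= => /negbTE ->.
Qed.

End SetHoles.

Section BlockGraph.
Variables (K V : finType) (f : V -> K) (F : rel V).

Definition block_graph : rel K := fun i j => (i != j) &&
  [forall x, forall y, (f x == i) ==> (f y == j) ==> F x y].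

Lemma block_graphP i j :
  reflect (i <> j /\ forall x y, f x = i -> f y = j -> F x y) (block_graph i j).
Proof.
apply: (iffP andP) => [[/eqP ij /forallP Fij]|[ij Fij]]; split=> //.
- by move=> x y fx fy; have /forallP := Fij x => /(_ y); rewrite fx fy !eqxx.
- exact/eqP.
- apply/forallP => x; apply/forallP => y.
  by apply/implyP => /eqP fx; apply/implyP => /eqP fy; apply: Fij.
Qed.

Lemma block_graph_irr : irreflexive block_graph.
Proof. by move=> i; rewrite /block_graph eqxx. Qed.

Hypothesis F_sym : symmetric F.

Lemma block_graph_sym : symmetric block_graph.
Proof.
move=> i j; apply/idP/idP => /block_graphP [ij Fij]; apply/block_graphP;
  by split=> [ji|x y fx fy]; [apply: ij | rewrite F_sym; apply: Fij].
Qed.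

Lemma block_graph_holefree : holefree F -> (forall i, exists x, f x = i) ->
  holefree block_graph.
Proof.
move=> F_hf f_surj n c [n4 c_inj c_cyc c_nochord].
apply: (holefree_no_set_hole F_sym F_hf (k := n) (X := fun t => [set x | f x == c t])).
split=> //.
- move=> t lt_t; have [x fx] := f_surj (c t).
  by apply/set0Pn; exists x; rewrite inE fx.
- move=> t u lt_t lt_u tu; rewrite disjoints_subset; apply/subsetP => x.
  by rewrite !inE => /eqP ->; apply/eqP => /(c_inj _ _ lt_t lt_u).
- move=> t lt_t x y; rewrite !inE => /eqP fx /eqP fy.
  by have /block_graphP [_ Fc] := c_cyc t lt_t; apply: Fc.
- move=> t u lt_t lt_u tu Fc; have /negP := c_nochord t u lt_t lt_u tu; apply.
  apply/block_graphP; split; first by case: tu => tu _ _ /(c_inj _ _ lt_t lt_u).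
  by move=> x y fx fy; apply: Fc; rewrite inE ?fx ?fy.
Qed.

End BlockGraph.

Section LiftGraph.
Variables (K V : finType) (f : V -> K) (F : rel V) (g : rel K).

Definition lift_graph : rel V := fun x y =>
  (f x == f y) && F x y || (f x != f y) && g (f x) (f y).

Lemma lift_graph_same x y : f x = f y -> lift_graph x y = F x y.
Proof. by move=> fxy; rewrite /lift_graph fxy eqxx /= orbF. Qed.

Lemma lift_graph_diff x y : f x <> f y -> lift_graph x y = g (f x) (f y).
Proof. by move=> /eqP fxy; rewrite /lift_graph (negbTE fxy). Qed.

Hypothesis F_holefree : holefree F.
Hypothesis g_holefree : holefree g.
(* Excludes the chordless square [a, b, a', b'] through a non-edge [a a'] inside a block. *)
Hypothesis lift_square : forall a a' b b', a <> a' -> f a = f a' -> ~~ F a a' ->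
  b <> b' -> f b <> f a -> f b' <> f a -> g (f a) (f b) -> g (f a) (f b') ->
  lift_graph b b'.

Section LiftHole.
Variables (n : nat) (c : nat -> V).
Hypothesis c_hole : hole lift_graph n c.

Lemma lift_hole_not_inj : ~ inj_below n (fun i => f (c i)).
Proof.
case: c_hole => n4 c_inj c_cyc c_nochord fc_inj.
apply: (g_holefree (n := n) (c := fun i => f (c i))).
have fc_neq i j : i < n -> j < n -> i <> j -> f (c i) <> f (c j).
  by move=> lt_i lt_j ij /(fc_inj _ _ lt_i lt_j).
split=> //.
- move=> i lt_i /=; rewrite -lift_graph_diff; first exact: c_cyc.
  by apply: (fc_neq _ _ lt_i (cnext_lt lt_i)) => /esym; apply: cnext_neq lt_i; lia.
- move=> i j lt_i lt_j ij; rewrite /= -lift_graph_diff; first exact: c_nochord.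
  by case: ij => ij _ _; apply: fc_neq.
Qed.

Lemma lift_hole_not_one_block : ~ (forall m, m < n -> f (c m) = f (c 0)).
Proof.
case: c_hole => n4 c_inj c_cyc c_nochord one_block.
have fcE i j : i < n -> j < n -> f (c i) = f (c j).
  by move=> lt_i lt_j; rewrite !one_block.
apply: (F_holefree (n := n) (c := c)); split=> //.
- move=> i lt_i; rewrite -lift_graph_same; first exact: c_cyc.
  exact: fcE (cnext_lt lt_i).
- by move=> i j lt_i lt_j ij; rewrite -lift_graph_same; [exact: c_nochord | exact: fcE].
Qed.

(* Every vertex of the hole in the block of [c z] is a lifted [g]-neighbour of
   [c (z + 1)], hence adjacent to it along the hole. *)
Lemma lift_hole_exit_block z w : z < n -> f (c (cnext n z)) <> f (c z) ->
  w < n -> f (c w) = f (c z) -> w = z \/ w = cnext n (cnext n z).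
Proof.
case: c_hole => _ _ c_cyc c_nochord lt_z fy lt_w fw.
case: (w =P z) => [|wz]; [by left | right].
have lt_y := cnext_lt lt_z; have wy : w <> cnext n z by move=> E; apply: fy; rewrite -E.
have fwy : f (c w) <> f (c (cnext n z)) by rewrite fw => /esym.
have gy : g (f (c z)) (f (c (cnext n z))).
  by rewrite -lift_graph_diff; [exact: c_cyc | rewrite -fw].
have : lift_graph (c w) (c (cnext n z)) by rewrite lift_graph_diff // fw.
case/(chordless_adjacent c_nochord lt_w lt_y wy) => [/(cnext_inj lt_z lt_w) zw|//].
by case: wz.
Qed.

(* A block left by the hole at [z] is met only at [z] and [z + 2]; if it is met
   twice, the hole is the square [z, z + 1, z + 2, z + 3], which [lift_square]
   forbids. *)
Lemma lift_hole_block_once z i j : z < n -> i < n -> j < n -> i <> j ->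
  f (c i) = f (c z) -> f (c j) = f (c z) -> f (c (cnext n z)) <> f (c z) -> False.
Proof.
move=> lt_z lt_i lt_j ij fi fj fy; have in_b := lift_hole_exit_block lt_z fy.
case: c_hole => n4 c_inj c_cyc c_nochord.
set b := f (c z) in fi fj fy in_b; set y := cnext n z in fy in_b.
have lt_y : y < n by apply: cnext_lt.
have n1 k : k < n -> cnext n k <> k by apply: cnext_neq; lia.
have fzy : f (c z) <> f (c y) by move=> E; apply: fy; rewrite -E.
have gby : g b (f (c y)) by rewrite -lift_graph_diff //; exact: c_cyc.
set y2 := cnext n y; have lt_y2 : y2 < n by apply: cnext_lt.
have [fy2 y2z] : f (c y2) = b /\ y2 <> z.
  case: (in_b i lt_i fi) (in_b j lt_j fj) => [|] Ei [|] Ej; rewrite Ei Ej in ij fi fj;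
    first [by case: ij | by split=> //; move=> E; apply: ij; rewrite -/y2 E].
have nF : ~~ F (c z) (c y2).
  rewrite -lift_graph_same; last by rewrite fy2.
  apply: c_nochord => //; split; first by move=> E; apply: y2z; rewrite E.
    exact: (n1 y lt_y).
  by move=> /esym; apply: cnext3_neq lt_z.
set y3 := cnext n y2; have lt_y3 : y3 < n by apply: cnext_lt.
have fy3 : f (c y3) <> b.
  by move/(in_b y3 lt_y3) => [E|E]; [apply: (cnext3_neq n4 lt_z) | apply: (n1 y2 lt_y2)].
have gby3 : g b (f (c y3)).
  by rewrite -fy2 -lift_graph_diff ?fy2; [exact: c_cyc | move=> E; apply: fy3; rewrite E].
have yy3 : y <> y3 by move=> /esym; apply: cnext2_neq lt_y; lia.
have zy3 : z = cnext n y3.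
  have zy3 : z <> y3 by move=> E; apply: fy3; rewrite -E.
  have fzy3 : f (c z) <> f (c y3) by move=> /esym.
  have : lift_graph (c z) (c y3) by rewrite lift_graph_diff.
  by case/(chordless_adjacent c_nochord lt_z lt_y3 zy3) => [E|->] //; case: yy3.
have := lift_square (a := c z) (a' := c y2) (b := c y) (b' := c y3).
move/(_ (fun E => y2z (esym (c_inj _ _ lt_z lt_y2 E))) (esym fy2) nF).
move/(_ (fun E => yy3 (c_inj _ _ lt_y lt_y3 E)) fy fy3 gby gby3).
apply/negP; apply: c_nochord => //; split; [done | exact: (n1 y2 lt_y2) |].
by rewrite -zy3 => E; apply: fzy; rewrite -/y E.
Qed.

End LiftHole.

Lemma lift_graph_holefree : holefree lift_graph.
Proof.
move=> n c c_hole; have [n4 _ _ _] := c_hole.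
have [i [j [lt_i lt_j ij fij]]] : exists i j, [/\ i < n, j < n, i <> j & f (c i) = f (c j)].
  apply: NNPP => no_pair; apply: (lift_hole_not_inj c_hole) => i j lt_i lt_j fij.
  by apply: NNPP => ij; apply: no_pair; exists i, j.
have [m lt_m fm] : exists2 m, m < n & f (c m) != f (c i).
  apply: NNPP => one_block; apply: (lift_hole_not_one_block c_hole) => m lt_m.
  have fmi k : k < n -> f (c k) = f (c i).
    by move=> lt_k; apply/eqP; apply: NNPP => fk; apply: one_block; exists k => //; apply/negP.
  by rewrite fmi // fmi //; lia.
have [z [lt_z /eqP fz /eqP fz1]] :=
  cnext_exit (P := fun k => f (c k) == f (c i)) lt_i lt_m (eqxx _) fm.
by apply: (lift_hole_block_once c_hole lt_z lt_i lt_j ij); rewrite -?fij fz.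
Qed.
End LiftGraph.

Definition unshift p i := if i <= p then i else i.-1.

Lemma unshiftE p i : i <> p.+1 ->
  (i <= p /\ unshift p i = i) \/ (p.+1 < i /\ unshift p i = i.-1).
Proof. by rewrite /unshift; case: ifP; lia. Qed.

Lemma unshift_lt n p i : p < n -> i < n.+1 -> i <> p.+1 -> unshift p i < n.
Proof. by move=> lt_p lt_i /unshiftE; lia. Qed.

Lemma unshift_inj p i j : i <> p.+1 -> j <> p.+1 -> unshift p i = unshift p j -> i = j.
Proof. by move=> /unshiftE + /unshiftE; lia. Qed.

Lemma unshift_cnext n p i : p < n -> i < n.+1 -> i <> p -> i <> p.+1 ->
  unshift p (cnext n.+1 i) = cnext n (unshift p i).
Proof.
move=> lt_p lt_i ip ip1; have lt_ui := unshift_lt lt_p lt_i ip1.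
have ci1 : cnext n.+1 i <> p.+1 by have := cnextE lt_i; lia.
have := unshiftE ci1; have := unshiftE ip1; have := cnextE lt_i; have := cnextE lt_ui.
lia.
Qed.

Lemma unshift_cnext_inserted n p : p < n -> unshift p (cnext n.+1 p.+1) = cnext n p.
Proof. by move=> lt_p; have := cnextE lt_p; rewrite /unshift /cnext; do ! case: ifP; lia. Qed.

Lemma unshift_nonadjacent n p a b : 3 < n -> p < n -> a < n.+1 -> b < n.+1 ->
  a <> p.+1 -> b <> p.+1 -> nonadjacent n.+1 a b ->
  ~ (unshift p a = p /\ unshift p b = cnext n p) ->
  ~ (unshift p b = p /\ unshift p a = cnext n p) ->
  nonadjacent n (unshift p a) (unshift p b).
Proof.
move=> n3 lt_p lt_a lt_b ap bp [ab ba ab'] h1 h2.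
have ua := unshiftE ap; have ub := unshiftE bp.
have lt_ua : unshift p a < n by lia.
have lt_ub : unshift p b < n by lia.
have hA := cnextE lt_a; have hB := cnextE lt_b; have hP := cnextE lt_p.
have hUA := cnextE lt_ua; have hUB := cnextE lt_ub.
(* Abstracting the [cnext] and [unshift] terms keeps the case split small enough for [lia]. *)
move: hA hB hP hUA hUB ua ub h1 h2 ba ab' lt_ua lt_ub; rewrite /nonadjacent.
generalize (cnext n (unshift p a)) (cnext n (unshift p b)) (cnext n.+1 a) (cnext n.+1 b)
  (cnext n p) (unshift p a) (unshift p b).
intros; repeat match goal with H : _ \/ _ |- _ => destruct H as [[? ?]|[? ?]] end;
  subst; split; lia.
Qed.

Definition insert_at (T : Type) (c : nat -> T) p x i :=
  if i == p.+1 then x else c (unshift p i).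

Lemma insert_at_new (T : Type) (c : nat -> T) p x : insert_at c p x p.+1 = x.
Proof. by rewrite /insert_at eqxx. Qed.

Lemma insert_atE (T : Type) (c : nat -> T) p x i :
  i <> p.+1 -> insert_at c p x i = c (unshift p i).
Proof. by move=> /eqP /negbTE; rewrite /insert_at => ->. Qed.

Section FillNeighbourhood.
Variables (T : finType) (g : rel T) (s : T).
Hypothesis g_sym : symmetric g.
Hypothesis g_irr : irreflexive g.

Definition fill_nbhd : rel T := fun x y => g x y || [&& x != y, g s x & g s y].

Lemma fill_nbhd_s x : fill_nbhd x s = g x s.
Proof. by rewrite /fill_nbhd g_irr !andbF orbF. Qed.

Lemma fill_nbhd_sym : symmetric fill_nbhd.
Proof.
by move=> x y; rewrite /fill_nbhd g_sym eq_sym; case: (g s x); case: (g s y); rewrite ?andbF.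
Qed.

Lemma fill_nbhd_irr : irreflexive fill_nbhd.
Proof. by move=> x; rewrite /fill_nbhd g_irr eqxx. Qed.

Hypothesis g_holefree : holefree g.

Section FillHole.
Variables (n : nat) (c : nat -> T).
Hypothesis c_hole : hole fill_nbhd n c.

Lemma fill_hole_avoids_s p : p < n -> c p <> s.
Proof.
case: c_hole => n4 c_inj c_cyc c_nochord lt_p cps.
pose r := if p == 0 then n.-1 else p.-1.
have lt_r : r < n by rewrite /r; case: ifP; lia.
have next_r : cnext n r = p by rewrite /r /cnext; case: ifP; case: ifP; lia.
have lt_q := cnext_lt lt_p; have Eq := cnextE lt_p; have Eq2 := cnextE lt_q.
have gsr : g s (c r) by have := c_cyc r lt_r; rewrite next_r cps fill_nbhd_s g_sym.
have gsq : g s (c (cnext n p)).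
  by have := c_cyc p lt_p; rewrite cps fill_nbhd_sym fill_nbhd_s g_sym.
have rq : r <> cnext n p by rewrite /r; case: ifP; lia.
have rq_apart : nonadjacent n r (cnext n p).
  split=> //; rewrite ?next_r; first by apply: cnext_neq; lia.
  by move: Eq Eq2 next_r; rewrite /r; case: ifP; lia.
have /negP := c_nochord _ _ lt_r lt_q rq_apart; apply.
apply/orP; right; rewrite gsr gsq !andbT.
by apply/eqP => /(c_inj _ _ lt_r lt_q).
Qed.

Lemma fill_hole_fill_edge : exists2 p, p < n & ~~ g (c p) (c (cnext n p)).
Proof.
case: c_hole => n4 c_inj c_cyc c_nochord; apply: NNPP => all_g.
apply: (g_holefree (n := n) (c := c)); split=> // [i lt_i | i j lt_i lt_j ij].
  by apply: NNPP => /negP ng; apply: all_g; exists i.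
by apply: contra (c_nochord _ _ lt_i lt_j ij) => gij; rewrite /fill_nbhd gij.
Qed.

Variable p : nat.
Hypothesis lt_p : p < n.
Hypothesis p_fill : ~~ g (c p) (c (cnext n p)).

Lemma fill_edge_nbrs : [/\ c p != c (cnext n p), g s (c p) & g s (c (cnext n p))].
Proof.
case: c_hole => _ _ c_cyc _; have := c_cyc p lt_p.
by rewrite /fill_nbhd (negbTE p_fill) => /and3P.
Qed.

(* A third neighbour [w] of [s] would be joined to both [c p] and [c (p + 1)] in
   [fill_nbhd], hence adjacent to both along the hole. *)
Lemma fill_hole_nbrs_s w : w < n -> g s (c w) -> w = p \/ w = cnext n p.
Proof.
case: c_hole => n4 c_inj c_cyc c_nochord lt_w gsw.
have [_ gsp gsq] := fill_edge_nbrs; set q := cnext n p in gsq *.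
have lt_q : q < n by apply: cnext_lt.
apply: NNPP => /not_or_and [wp wq].
have filled v : v < n -> v <> w -> g s (c v) -> fill_nbhd (c w) (c v).
  move=> lt_v vw gsv; rewrite /fill_nbhd gsw gsv !andbT; apply/orP; right.
  by apply/eqP => /(c_inj _ _ lt_w lt_v) /esym.
have adjacent v : v < n -> v <> w -> g s (c v) -> v = cnext n w \/ w = cnext n v.
  move=> lt_v vw gsv; apply: (chordless_adjacent c_nochord lt_w lt_v).
    by move=> E; apply: vw.
  exact: filled.
have := adjacent p lt_p (fun E => wp (esym E)) gsp.
have := adjacent q lt_q (fun E => wq (esym E)) gsq.
have := cnextE lt_w; have := cnextE lt_p; have := cnextE lt_q; rewrite /q; lia.
Qed.

Lemma fill_hole_g_edge i : i < n -> i <> p -> g (c i) (c (cnext n i)).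
Proof.
case: c_hole => n4 _ c_cyc _ lt_i ip; have := c_cyc i lt_i.
case/orP => [//|/and3P [_ gsi gsi1]].
have := fill_hole_nbrs_s lt_i gsi; have := fill_hole_nbrs_s (cnext_lt lt_i) gsi1.
by have := cnextE lt_i; have := cnextE lt_p; have := cnextE (cnext_lt lt_p); lia.
Qed.

Local Notation d := (insert_at c p s).

Lemma insert_hole_inj : inj_below n.+1 d.
Proof.
have [_ c_inj _ _] := c_hole.
have not_s i : i < n.+1 -> i <> p.+1 -> d i <> s.
  by move=> lt_i ip; rewrite insert_atE //; apply: fill_hole_avoids_s; apply: unshift_lt.
move=> a b lt_a lt_b; case: (a =P p.+1) => [->|ap]; case: (b =P p.+1) => [->|bp] //.
- by rewrite insert_at_new => /esym /(not_s _ lt_b bp).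
- by rewrite insert_at_new => /(not_s _ lt_a ap).
- rewrite !insert_atE // => /(c_inj _ _ (unshift_lt lt_p lt_a ap) (unshift_lt lt_p lt_b bp)).
  exact: unshift_inj.
Qed.

Lemma insert_hole_cycle : ncycle g n.+1 d.
Proof.
move=> i lt_i; case: (i =P p.+1) => [Ei|ip1].
  subst i; rewrite insert_at_new insert_atE; last by have := cnextE lt_i; lia.
  by rewrite unshift_cnext_inserted //; have [] := fill_edge_nbrs.
case: (i =P p) => [Ei|ip].
  subst i; have -> : cnext n.+1 p = p.+1 by rewrite /cnext ifT //; lia.
  rewrite insert_at_new insert_atE // /unshift leqnn g_sym.
  by have [] := fill_edge_nbrs.
rewrite !insert_atE //; last by have := cnextE lt_i; lia.
rewrite unshift_cnext //; apply: fill_hole_g_edge; first exact: unshift_lt.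
by have := unshiftE ip1; lia.
Qed.

Lemma insert_hole_new_apart b : b < n.+1 -> nonadjacent n.+1 p.+1 b -> ~~ g s (d b).
Proof.
move=> lt_b [ab1 ab2 ab3]; have bp : b <> p.+1 by move=> E; apply: ab1.
rewrite insert_atE //; apply/negP => /(fill_hole_nbrs_s (unshift_lt lt_p lt_b bp)).
have lt_p1 : p.+1 < n.+1 by [].
have := unshiftE bp.
by have := cnextE lt_p1; have := cnextE lt_b; have := cnextE lt_p; lia.
Qed.

Lemma insert_hole_chordless : chordless g n.+1 d.
Proof.
have [n4 _ _ c_nochord] := c_hole.
move=> a b lt_a lt_b ab.
case: (a =P p.+1) => [Ea|ap].
  by rewrite Ea insert_at_new; apply: insert_hole_new_apart => //; rewrite -Ea.
case: (b =P p.+1) => [bp|bp].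
  rewrite bp insert_at_new g_sym; apply: insert_hole_new_apart => //.
  by rewrite -bp; apply: nonadjacent_sym.
rewrite !insert_atE //; set q := cnext n p.
case: (boolP ((unshift p a == p) && (unshift p b == q))) => [/andP [/eqP -> /eqP ->] //|h1].
case: (boolP ((unshift p b == p) && (unshift p a == q))) => [/andP [/eqP -> /eqP ->]|h2].
  by rewrite g_sym.
have uab : nonadjacent n (unshift p a) (unshift p b).
  apply: unshift_nonadjacent => // -[E1 E2]; [move: h1 | move: h2];
    by rewrite E1 E2 /q !eqxx.
have lt_ua := unshift_lt lt_p lt_a ap; have lt_ub := unshift_lt lt_p lt_b bp.
apply: contra (c_nochord _ _ lt_ua lt_ub uab) => gab.
by rewrite /fill_nbhd gab.
Qed.

(* Inserting [s] between [c p] and [c (p + 1)] yields a hole of [g] of length [n + 1]. *)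
Lemma fill_hole_insert : False.
Proof.
have [n4 _ _ _] := c_hole.
apply: (g_holefree (n := n.+1) (c := d)); split.
- lia.
- exact: insert_hole_inj.
- exact: insert_hole_cycle.
- exact: insert_hole_chordless.
Qed.

End FillHole.
Lemma fill_nbhd_holefree : holefree fill_nbhd.
Proof.
move=> n c c_hole; have [p lt_p p_fill] := fill_hole_fill_edge c_hole.
exact: (fill_hole_insert c_hole lt_p p_fill).
Qed.

(* Otherwise [x, s, y, q] would be a chordless square of [g]. *)
Lemma fill_clique_nbrs (X : {set T}) x y : s \notin X -> is_clique fill_nbhd X ->
  x \in X -> y \in X -> x != y -> g s x -> g s y -> ~~ g x y ->
  forall q, q \in X -> g s q.
Proof.
move=> sX X_clique xX yX xy gsx gsy ngxy q qX; apply: NNPP => /negP ngsq.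
have not_s v : v \in X -> v != s by move=> vX; apply/eqP => E; move: sX; rewrite -E vX.
have qx : q != x by apply/eqP => E; move: ngsq; rewrite E gsx.
have qy : q != y by apply/eqP => E; move: ngsq; rewrite E gsy.
have g_q v : v \in X -> v != q -> g v q.
  move=> vX vq; have := X_clique v q vX qX vq.
  by rewrite /fill_nbhd (negbTE ngsq) !andbF orbF.
have uniq_xsyq : uniq [:: x; s; y; q].
  by rewrite /= !inE !negb_or not_s // xy eq_sym qx !(eq_sym s) !not_s // eq_sym qy.
have gxs : g x s by rewrite g_sym.
have gyq : g y q by rewrite g_q // eq_sym.
have gqx : g q x by rewrite g_sym g_q // eq_sym.
have := holefree_square g_sym g_holefree uniq_xsyq gxs gsy gyq gqx.
by rewrite (negbTE ngxy) (negbTE ngsq).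
Qed.

Lemma fill_nbhd_maximal_clique (X : {set T}) : s \notin X ->
  maximal_clique fill_nbhd X -> maximal_clique g X.
Proof.
move=> sX [X_clique X_max]; split=> [x y xX yX xy | Y XY Y_clique]; last first.
  by apply: (X_max Y XY) => x y xY yY xy; rewrite /fill_nbhd Y_clique.
have := X_clique x y xX yX xy; case/orP => [//|/and3P [_ gsx gsy]].
apply: NNPP => /negP ngxy; apply: (X_max (s |: X)).
  by apply: properUr; rewrite sub1set.
have nbrs := fill_clique_nbrs sX X_clique xX yX xy gsx gsy ngxy.
move=> u v /setU1P [->|uX] /setU1P [->|vX] uv.
- by rewrite eqxx in uv.
- by rewrite /fill_nbhd nbrs.
- by rewrite fill_nbhd_sym /fill_nbhd nbrs.
- exact: X_clique.
Qed.

End FillNeighbourhood.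

Definition nedges (T : finType) (g : rel T) := #|[set p : T * T | g p.1 p.2]|.

Lemma nedges_lt (T : finType) (g g' : rel T) x y :
  subrel_edges g' g -> g x y -> ~~ g' x y -> nedges g' < nedges g.
Proof.
move=> g'g gxy ng'xy; apply: proper_card; apply/properP; split.
  by apply/subsetP => -[a b]; rewrite !inE => /g'g.
by exists (x, y); rewrite !inE.
Qed.

Lemma ex_min_nedges (T : finType) (P : rel T -> Prop) g : P g ->
  exists g0, P g0 /\ forall g', P g' -> ~ nedges g' < nedges g0.
Proof.
move=> Pg; have [m le_gm] : exists m, nedges g <= m by exists (nedges g).
elim: m g Pg le_gm => [|m IH] g Pg le_gm; first by exists g; split=> // g' _; lia.
case: (classic (exists g', P g' /\ nedges g' < nedges g)) => [[g' [Pg' lt_g']]|no_less].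
  by apply: (IH g' Pg'); lia.
by exists g; split=> // g' Pg' lt_g'; apply: no_less; exists g'.
Qed.

Section ExpansionPMC.
Variables (K V : finType) (eG : rel K) (eM : rel V) (f : V -> K).
Variables (Omega : {set V}) (F : rel V).
Hypothesis G_simple : simple_graph eG.
Hypothesis f_surj : forall i, exists x, f x = i.
Hypothesis Omega_blocks : Omega = [set x | f x \in f @: Omega].
Hypothesis F_mintri : minimal_triangulation (expand eG eM f) F.
Hypothesis Omega_max : maximal_clique F Omega.

Local Notation Q := (block_graph f F).
Local Notation OmegaG := (f @: Omega).

Lemma F_sym : symmetric F. Proof. by case: F_mintri => -[]. Qed.
Lemma F_irr : irreflexive F. Proof. by case: F_mintri => -[]. Qed.
Lemma F_holefree : holefree F. Proof. by case: F_mintri => _ _ /chordalE. Qed.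
Lemma expand_sub_F : subrel_edges (expand eG eM f) F. Proof. by case: F_mintri. Qed.
Lemma G_irr : irreflexive eG. Proof. by case: G_simple. Qed.

Lemma in_Omega x : (x \in Omega) = (f x \in OmegaG).
Proof. by rewrite {1}Omega_blocks inE. Qed.

Lemma G_sub_Q : subrel_edges eG Q.
Proof.
move=> i j eij; apply/block_graphP; split; first by move=> E; move: eij; rewrite E G_irr.
by move=> x y fx fy; apply: expand_sub_F; rewrite /expand fx fy eij orbT.
Qed.

Lemma OmegaG_clique : is_clique Q OmegaG.
Proof.
move=> i j iO jO ij; apply/block_graphP; split; first exact/eqP.
move=> x y fx fy; case: Omega_max => Omega_clique _; apply: Omega_clique.
- by rewrite in_Omega fx.
- by rewrite in_Omega fy.
- by apply: contra ij => /eqP E; rewrite -fx -fy E.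
Qed.

(* A block [j] outside [OmegaG] that is [Q]-adjacent to all of [OmegaG] would let
   any of its vertices extend the maximal clique [Omega] of [F]. *)
Lemma maximal_clique_sub_Q (g : rel K) : subrel_edges g Q -> is_clique g OmegaG ->
  maximal_clique g OmegaG.
Proof.
move=> gQ O_clique; split=> // S' /properP [sub [j jS jO]] S_clique.
have [x fx] := f_surj j.
have Fx y : y \in Omega -> F x y.
  move=> yO; have fyS : f y \in S' by apply: (subsetP sub); rewrite -in_Omega.
  have jy : j != f y by apply: contraNneq jO => ->; rewrite -in_Omega.
  by have /gQ /block_graphP [_ Fj] := S_clique j (f y) jS fyS jy; apply: Fj.
case: Omega_max => Omega_clique Omega_maxi; apply: (Omega_maxi (x |: Omega)).
  by apply: properUr; rewrite sub1set in_Omega fx.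
move=> u v /setU1P [->|uO] /setU1P [->|vO] uv.
- by rewrite eqxx in uv.
- exact: Fx.
- by rewrite F_sym; apply: Fx.
- exact: Omega_clique.
Qed.

Definition nonclique_block : pred K := fun i =>
  [exists a, exists a', [&& a != a', f a == i, f a' == i & ~~ F a a']].

Lemma nonclique_blockP i :
  reflect (exists a a', [/\ a <> a', f a = i, f a' = i & ~~ F a a']) (nonclique_block i).
Proof.
apply: (iffP idP) => [|[a [a' [aa' fa fa' nFaa']]]].
  case/existsP => a /existsP [a' /and4P [/eqP aa' /eqP fa /eqP fa' nFaa']].
  by exists a, a'.
apply/existsP; exists a; apply/existsP; exists a'.
by rewrite fa fa' nFaa' !eqxx /= ?andbT; apply/eqP.
Qed.

Lemma nonclique_block_square a a' b b' : a <> a' -> f a = f a' -> ~~ F a a' -> b <> b' ->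
  f b <> f a -> f b' <> f a -> Q (f a) (f b) -> Q (f a) (f b') -> F b b'.
Proof.
move=> aa' faa' nFaa' bb' fba fb'a /block_graphP [_ Fab] /block_graphP [_ Fab'].
have neq x y : f x <> f y -> x != y by move=> fxy; apply/eqP => E; apply: fxy; rewrite E.
have uniq_abab' : uniq [:: a; b; a'; b'].
  have ab : a != b by apply: neq => /esym.
  have ab' : a != b' by apply: neq => /esym.
  have ba' : b != a' by apply: neq; rewrite -faa'.
  have a'b' : a' != b' by apply: neq; rewrite -faa' => /esym.
  rewrite /= !inE !negb_or ab ab' ba' a'b' /= !andbT.
  by apply/andP; split; apply/eqP.
have Fba' : F b a' by rewrite F_sym; apply: Fab (esym faa') erefl.
have Fa'b' : F a' b' by apply: Fab' (esym faa') erefl.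
have Fb'a : F b' a by rewrite F_sym; apply: Fab' erefl erefl.
have := holefree_square F_sym F_holefree uniq_abab' (Fab a b erefl erefl) Fba' Fa'b' Fb'a.
by rewrite (negbTE nFaa').
Qed.

Lemma nonclique_block_notin i : nonclique_block i -> i \notin OmegaG.
Proof.
case/nonclique_blockP => a [a' [aa' fa fa' nFaa']]; apply/negP => iO.
case: Omega_max => Omega_clique _; move/negP: nFaa'; apply.
by apply: Omega_clique; rewrite ?in_Omega ?fa ?fa' //; apply/eqP.
Qed.

Lemma nonclique_block_indep s t : nonclique_block s -> nonclique_block t -> ~~ Q s t.
Proof.
case/nonclique_blockP => a [a' [aa' fa fa' nFaa']].
case/nonclique_blockP => b [b' [bb' fb fb' nFbb']].
apply/negP => Qst; have st : s <> t by move=> E; move: Qst; rewrite E block_graph_irr.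
have := nonclique_block_square aa' (etrans fa (esym fa')) nFaa' bb'.
by rewrite fa fb fb' (negbTE nFbb') => /(_ (not_eq_sym st) (not_eq_sym st) Qst Qst).
Qed.

Lemma nonclique_block_nbrs s x y : nonclique_block s -> Q s x -> Q s y -> x != y -> Q x y.
Proof.
case/nonclique_blockP => a [a' [aa' fa fa' nFaa']] Qsx Qsy xy.
have sx : s <> x by move=> E; move: Qsx; rewrite E block_graph_irr.
have sy : s <> y by move=> E; move: Qsy; rewrite E block_graph_irr.
apply/block_graphP; split; first exact/eqP.
move=> b b' fb fb'; apply: (nonclique_block_square aa') => //.
- by rewrite fa fa'.
- by move=> E; move: xy; rewrite -fb -fb' E eqxx.
- by rewrite fb fa; apply: not_eq_sym.
- by rewrite fb' fa; apply: not_eq_sym.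
- by rewrite fa fb.
- by rewrite fa fb'.
Qed.

Section FillNonclique.
Variable g : rel K.
Hypothesis g_sym : symmetric g.
Hypothesis g_irr : irreflexive g.
Hypothesis g_holefree : holefree g.
Hypothesis g_sub_Q : subrel_edges g Q.

Definition fill_nbhds (l : seq K) := foldr (fun t h => fill_nbhd h t) g l.

Lemma fill_nbhds_sym_irr l : symmetric (fill_nbhds l) /\ irreflexive (fill_nbhds l).
Proof.
elim: l => [|t l [h_sym h_irr]] //=.
by split; [apply: fill_nbhd_sym | apply: fill_nbhd_irr].
Qed.

Lemma fill_nbhds_holefree l : holefree (fill_nbhds l).
Proof.
elim: l => //= t l IH; have [h_sym h_irr] := fill_nbhds_sym_irr l.
exact: fill_nbhd_holefree.
Qed.

Lemma fill_nbhds_ge l : subrel_edges g (fill_nbhds l).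
Proof. by elim: l => [|t l IH] //= x y gxy; rewrite /fill_nbhd IH. Qed.

(* Filling the neighbourhood of a nonclique block stays inside [Q], and leaves the
   neighbourhoods of all nonclique blocks unchanged since these are independent in [Q]. *)
Lemma fill_nbhds_Q l : all nonclique_block l ->
  subrel_edges (fill_nbhds l) Q /\
  forall s x, nonclique_block s -> fill_nbhds l s x = g s x.
Proof.
elim: l => [|t l IH] //= /andP [nb_t /IH [hQ h_nbrs]]; split.
  move=> x y; rewrite /fill_nbhd => /orP [/hQ //|/and3P [xy htx hty]].
  exact: nonclique_block_nbrs nb_t (hQ _ _ htx) (hQ _ _ hty) xy.
move=> s x nb_s; rewrite /fill_nbhd h_nbrs //.
case hts : (fill_nbhds l t s); last by rewrite andbF orbF.
by move: (nonclique_block_indep nb_t nb_s); rewrite (hQ _ _ hts).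
Qed.

Lemma fill_nbhds_nbrs l s x y : all nonclique_block l -> s \in l -> x != y ->
  fill_nbhds l s x -> fill_nbhds l s y -> fill_nbhds l x y.
Proof.
elim: l => [|t l IH] //= /andP [nb_t nb_l] s_tl xy.
have [_ h_nbrs] := fill_nbhds_Q (l := t :: l) (introT andP (conj nb_t nb_l)).
have [_ h'_nbrs] := fill_nbhds_Q nb_l.
have nb_s : nonclique_block s by case/predU1P: s_tl => [->|/(allP nb_l)].
move: (h_nbrs s x nb_s) (h_nbrs s y nb_s) => /= -> ->.
case/predU1P: s_tl => [<-|s_l] gsx gsy.
  by rewrite /fill_nbhd (h'_nbrs s x) // (h'_nbrs s y) // gsx gsy xy orbT.
by apply/orP; left; apply: IH; rewrite // h'_nbrs.
Qed.

Lemma fill_nbhds_maximal_clique l : all nonclique_block l ->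
  maximal_clique (fill_nbhds l) OmegaG -> maximal_clique g OmegaG.
Proof.
elim: l => [|t l IH] //= /andP [nb_t nb_l] O_max; apply: (IH nb_l).
have [h_sym _] := fill_nbhds_sym_irr l.
exact: (fill_nbhd_maximal_clique h_sym (@fill_nbhds_holefree l)
  (nonclique_block_notin nb_t) O_max).
Qed.

End FillNonclique.

(* The lift of [h] is a chordal graph between [H] and [F], hence equal to [F] by
   minimality of the triangulation. *)
Lemma block_graph_sub_lift (h : rel K) : symmetric h -> irreflexive h -> holefree h ->
  subrel_edges eG h -> subrel_edges h Q ->
  (forall a a' b b', a <> a' -> f a = f a' -> ~~ F a a' -> b <> b' ->
    f b <> f a -> f b' <> f a -> h (f a) (f b) -> h (f a) (f b') -> lift_graph f F h b b') ->
  subrel_edges Q h.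
Proof.
move=> h_sym h_irr h_hf Gh hQ lift_square; set L := lift_graph f F h.
have L_chordal : chordal L by apply/chordalE; apply: lift_graph_holefree F_holefree h_hf _.
have L_simple : simple_graph L.
  split=> [x y|x]; last by rewrite /L /lift_graph eqxx F_irr.
  by rewrite /L /lift_graph (eq_sym (f x)) F_sym h_sym.
have HL : subrel_edges (expand eG eM f) L.
  move=> x y; rewrite /expand => /orP [/andP [/eqP fxy exy]|eij].
    by rewrite /L lift_graph_same //; apply: expand_sub_F; rewrite /expand fxy eqxx exy.
  have fxy : f x <> f y by move=> E; move: eij; rewrite E G_irr.
  by rewrite /L lift_graph_diff //; apply: Gh.
have LF : subrel_edges L F.
  move=> x y; rewrite /L /lift_graph.
  by case/orP => [/andP [_ //]|/andP [_ /hQ /block_graphP [_ Fxy]]]; apply: Fxy.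
have FL x y : F x y -> L x y.
  move=> Fxy; apply: NNPP => /negP nLxy.
  case: F_mintri => _ _ _ F_min; apply: (F_min L L_simple HL LF _ L_chordal).
  by exists x, y; rewrite Fxy.
move=> i j /block_graphP [ij Fij]; have [x fx] := f_surj i; have [y fy] := f_surj j.
by have := FL x y (Fij x y fx fy); rewrite /L lift_graph_diff fx fy.
Qed.

Lemma chordal_sub_Q_clique (g : rel K) : simple_graph g -> subrel_edges eG g ->
  subrel_edges g Q -> chordal g -> is_clique g OmegaG.
Proof.
move=> [g_sym g_irr] Gg gQ /chordalE g_hf.
have nb_l : all nonclique_block (enum nonclique_block) by apply/allP => i; rewrite mem_enum.
set h := fill_nbhds g (enum nonclique_block).
have [h_sym h_irr] := fill_nbhds_sym_irr g_sym g_irr (enum nonclique_block).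
have [hQ _] := fill_nbhds_Q gQ nb_l.
have h_hf : holefree h := fill_nbhds_holefree g_sym g_irr g_hf (l := enum nonclique_block).
have Qh : subrel_edges Q h.
  apply: (block_graph_sub_lift h_sym h_irr h_hf _ hQ).
    by move=> i j /Gg; apply: fill_nbhds_ge.
  move=> a a' b b' aa' faa' nFaa' bb' fba fb'a hab hab'.
  have nb_a : nonclique_block (f a) by apply/nonclique_blockP; exists a, a'.
  case: (f b =P f b') => [fbb'|fbb'].
    by rewrite lift_graph_same //; apply: (nonclique_block_square aa') => //; apply: hQ.
  rewrite lift_graph_diff //; apply: (fill_nbhds_nbrs gQ nb_l _ _ hab hab').
    by rewrite mem_enum.
  exact/eqP.
have h_clique : is_clique h OmegaG by move=> i j iO jO ij; apply: Qh; apply: OmegaG_clique.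
have h_max := maximal_clique_sub_Q hQ h_clique.
by have [] := fill_nbhds_maximal_clique g_sym g_irr g_hf nb_l h_max.
Qed.

Lemma OmegaG_pmc : potential_maximal_clique eG OmegaG.
Proof.
pose P g := [/\ simple_graph g, chordal g, subrel_edges eG g, subrel_edges g Q
  & is_clique g OmegaG].
have PQ : P Q.
  split=> //; [split; [exact: block_graph_sym F_sym | exact: block_graph_irr] |
    apply/chordalE; exact: block_graph_holefree F_sym F_holefree f_surj |
    exact: G_sub_Q | exact: OmegaG_clique].
have [g0 [[g0_simple g0_chordal Gg0 g0Q g0_clique] g0_min]] := ex_min_nedges PQ.
exists g0; split; last exact: maximal_clique_sub_Q.
split=> // g' g'_simple Gg' g'g0 [x [y /andP [g0xy ng'xy]]] g'_chordal.
have g'Q : subrel_edges g' Q by move=> a b /g'g0 /g0Q.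
apply: (g0_min g'); first by split=> //; exact: chordal_sub_Q_clique.
exact: nedges_lt g'g0 g0xy ng'xy.
Qed.

End ExpansionPMC.

Theorem lemma6 (K V : finType) (eG : rel K) (eM : rel V) (f : V -> K)
    (Omega : {set V}) :
  simple_graph eG -> simple_graph eM ->
  (forall i : K, exists x : V, f x = i) ->
  potential_maximal_clique (expand eG eM f) Omega ->
  Omega = [set x | f x \in f @: Omega] ->
  potential_maximal_clique eG (f @: Omega).
Proof.
move=> G_simple _ f_surj [F [F_mintri Omega_max]] Omega_blocks.
exact: OmegaG_pmc G_simple f_surj Omega_blocks F_mintri Omega_max.
Qed.
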